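(* Consider a human–algorithm system (as defined in the context). Let $i^+\in\arg\max_i c(a_i,h_i)$ and $i^-\in\arg\min_i c(a_i,h_i)$. Let $\epsilon_a=\max_i a_i-\min_i a_i$, $\epsilon_h=\max_i h_i-\min_i h_i$ and $\epsilon_c=c(a_{i^+},h_{i^+})-c(a_{i^-},h_{i^-})$ be the loss disparities of the algorithm, the unaided human, and the combined system. If either (i) $h_{i^+}\le a_{i^+}$ and $h_{i^-}\ge a_{i^-}$, or (ii) $h_{i^+}\ge a_{i^+}$ and $h_{i^-}\le a_{i^-}$, then $\epsilon_c\le\max(\epsilon_a,\epsilon_h)$.
   Context: A human–algorithm system consists of: an integer $N\ge1$ (number of regimes); probabilities $p_1,\dots,p_N\ge 0$ with $\sum_i p_i=1$; algorithmic losses $a_1,\dots,a_N\ge 0$ and unaided-human losses $h_1,\dots,h_N\ge0$; and a combining function $c:[0,\infty)^2\to\mathbb{R}$ satisfying $\min(a,h)\le c(a,h)\le\max(a,h)$ for all $a,h\ge0$, where $c(a_i,h_i)$ is the loss of the combined system in regime $i$. *)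

From mathcomp Require Import all_boot all_order all_algebra.
Set Implicit Arguments. Unset Strict Implicit. Unset Printing Implicit Defensive.
Import Order.TTheory GRing.Theory Num.Theory.
Local Open Scope ring_scope.

Definition maxI (R : realDomainType) (n : nat) (f : 'I_n.+1 -> R) : R :=
  \big[Num.max/f ord0]_(i < n.+1) f i.
Definition minI (R : realDomainType) (n : nat) (f : 'I_n.+1 -> R) : R :=
  \big[Num.min/f ord0]_(i < n.+1) f i.

Record is_system (R : realDomainType) (n : nat) (p a h : 'I_n.+1 -> R)
    (c : R -> R -> R) : Prop := {
  sys_p_ge0 : forall i, 0 <= p i;
  sys_p_sum : \sum_(i < n.+1) p i = 1;
  sys_a_ge0 : forall i, 0 <= a i;
  sys_h_ge0 : forall i, 0 <= h i;
  sys_c_bounds : forall x y : R, 0 <= x -> 0 <= y ->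
      Num.min x y <= c x y /\ c x y <= Num.max x y
}.

From mathcomp Require Import all_boot all_order all_algebra.
Set Implicit Arguments. Unset Strict Implicit. Unset Printing Implicit Defensive.
Import Order.TTheory GRing.Theory Num.Theory.
Local Open Scope ring_scope.

Lemma le_maxI {R : realDomainType} {n} (f : 'I_n.+1 -> R) i : f i <= maxI f.
Proof. exact: le_bigmax. Qed.

Lemma minI_le {R : realDomainType} {n} (f : 'I_n.+1 -> R) i : minI f <= f i.
Proof. exact: bigmin_le. Qed.

Lemma ler_spread (R : realDomainType) n (f : 'I_n.+1 -> R) i j x y :
  x <= f i -> f j <= y -> x - y <= maxI f - minI f.
Proof.
move=> le_x_fi le_fj_y; apply: lerB.
- exact: le_trans le_x_fi (le_maxI f i).
- exact: le_trans (minI_le f j) le_fj_y.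
Qed.

Section CombinedLoss.

Variables (R : realDomainType) (n : nat) (p a h : 'I_n.+1 -> R).
Variable c : R -> R -> R.
Hypothesis sys : is_system p a h c.

Lemma combined_between i :
  Num.min (a i) (h i) <= c (a i) (h i) <= Num.max (a i) (h i).
Proof.
have [lo hi] := sys_c_bounds sys (sys_a_ge0 sys i) (sys_h_ge0 sys i).
by rewrite lo hi.
Qed.

Lemma combined_le_alg i : h i <= a i -> c (a i) (h i) <= a i.
Proof.
by move=> le_i; have /andP[] := combined_between i; rewrite (max_idPl le_i).
Qed.

Lemma alg_le_combined i : a i <= h i -> a i <= c (a i) (h i).
Proof.
by move=> le_i; have /andP[] := combined_between i; rewrite (min_idPl le_i).
Qed.

Lemma combined_le_human i : a i <= h i -> c (a i) (h i) <= h i.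
Proof.
by move=> le_i; have /andP[] := combined_between i; rewrite (max_idPr le_i).
Qed.

Lemma human_le_combined i : h i <= a i -> h i <= c (a i) (h i).
Proof.
by move=> le_i; have /andP[] := combined_between i; rewrite (min_idPr le_i).
Qed.

End CombinedLoss.

Theorem lemma10 (R : realFieldType) (n : nat) (p a h : 'I_n.+1 -> R)
    (c : R -> R -> R) (ip im : 'I_n.+1) :
  is_system p a h c ->
  (forall i, c (a i) (h i) <= c (a ip) (h ip)) ->
  (forall i, c (a im) (h im) <= c (a i) (h i)) ->
  ((h ip <= a ip /\ a im <= h im) \/ (a ip <= h ip /\ h im <= a im)) ->
  c (a ip) (h ip) - c (a im) (h im)
    <= Num.max (maxI a - minI a) (maxI h - minI h).
Proof.
move=> sys _ _ [[ha_ip ah_im] | [ah_ip ha_im]]; rewrite le_max.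
- by rewrite (ler_spread (combined_le_alg sys ha_ip) (alg_le_combined sys ah_im)).
- by rewrite (ler_spread (combined_le_human sys ah_ip) (human_le_combined sys ha_im))
    orbT.
Qed.
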